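(* Let $X=\{x_1,\dots,x_M\}\subset\mathbb{R}^n$ be finite and $\phi_1,\dots,\phi_N$ real functions on $X$ such that the matrix $V$, $V_{i,j}=\phi_j(x_i)$, has rank $N$. Then: (i) $w^*\in\mathbb{R}^M_{\geq0}$ solves Problem 1 if and only if it solves Problem 2; (ii) $z^*\in\mathbb{R}^M$ solves Problem 3 if and only if $w^*:=(z_1^{*2},\dots,z_M^{*2})$ solves Problem 1. In either case, $w^*$ is a D-optimal design for $\Phi=\{\phi_1,\dots,\phi_N\}$ on $X$ (supported on $\{x_i: w^*_i>0\}$).
   Context: Let $G(w)=V^t\operatorname{diag}(w)V$ for $w\in\mathbb{R}^M$. Problem 1: find $w^*\in\mathbb{R}^M_{\geq0}$ maximizing $\det G(w)$ over $\{w\in\mathbb{R}^M_{\geq0}:\|w\|_1=1\}$; a solution is called a D-optimal design. Problem 2: find $w^*\in\mathbb{R}^M_{\geq0}$ minimizing $E(w)=-\frac1N\log\det G(w)+\|w\|_1$ over $\mathbb{R}^M_{\geq0}$ (with $E=+\infty$ where $\det G(w)=0$). Problem 3: find $z^*\in\mathbb{R}^M$ minimizing $F(z)=E((z_1^2,\dots,z_M^2))=-\frac1N\log\det G((z_1^2,\dots,z_M^2))+\|z\|_2^2$ over $\mathbb{R}^M$ (with $F=+\infty$ where the determinant vanishes). *)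

From HB Require Import structures.
From mathcomp Require Import all_boot all_order all_algebra.
From mathcomp Require Import reals ereal exp.
Set Implicit Arguments. Unset Strict Implicit. Unset Printing Implicit Defensive.
Import Order.TTheory GRing.Theory Num.Theory.
Local Open Scope ring_scope.

Section Design.
Variables (R : realType) (M N : nat) (V : 'M[R]_(M, N)).

Definition Gmx (w : 'rV[R]_M) : 'M[R]_N := V^T *m diag_mx w *m V.

Definition nonneg (w : 'rV[R]_M) : Prop := forall i, 0 <= w 0 i.

Definition norm1 (w : 'rV[R]_M) : R := \sum_i `|w 0 i|.
Definition norm2sq (z : 'rV[R]_M) : R := \sum_i (z 0 i) ^+ 2.

Definition sqv (z : 'rV[R]_M) : 'rV[R]_M := \row_i (z 0 i) ^+ 2.

Definition feasible1 (w : 'rV[R]_M) : Prop := nonneg w /\ norm1 w = 1.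
Definition solves1 (w : 'rV[R]_M) : Prop :=
  feasible1 w /\ forall w', feasible1 w' -> \det (Gmx w') <= \det (Gmx w).

Definition D_optimal (w : 'rV[R]_M) : Prop := solves1 w.

Definition Efun (w : 'rV[R]_M) : \bar R :=
  if \det (Gmx w) == 0 then +oo%E
  else (- (N%:R)^-1 * ln (\det (Gmx w)) + norm1 w)%:E.
Definition solves2 (w : 'rV[R]_M) : Prop :=
  nonneg w /\ forall w', nonneg w' -> (Efun w <= Efun w')%E.

Definition Ffun (z : 'rV[R]_M) : \bar R := Efun (sqv z).
Definition solves3 (z : 'rV[R]_M) : Prop :=
  forall z', (Ffun z <= Ffun z')%E.

End Design.

(* Along a ray, det G(t w) = t^N det G(w), so E(t w) = E(w) - ln t + (t - 1) |w|_1,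
   which by ln s <= s - 1 (with equality only at s = 1) is minimal exactly at
   t = 1 / |w|_1.  Hence minimisers of E lie on the simplex, where
   E = 1 - (1/N) ln det G, and minimising E is maximising det G.  Problem 3 is
   Problem 2 after the surjective substitution w = (z_i^2)_i.  Since G(w) is a
   Gram matrix for w >= 0, det G(w) >= 0 there, and rank V = N makes
   det G(1, ..., 1) > 0, so E is not identically +oo. *)

From HB Require Import structures.
From mathcomp Require Import all_boot all_order all_algebra.
From mathcomp Require Import reals ereal exp.
From mathcomp Require Import lra.
Import Order.TTheory GRing.Theory Num.Theory.
Local Open Scope ring_scope.
Set Implicit Arguments. Unset Strict Implicit.

Section Gram.
Variable R : realType.

Lemma mulmx_tr_row_eq0 k (u : 'rV[R]_k) : (u *m u^T == 0) = (u == 0).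
Proof.
apply/eqP/eqP => [uu|->]; last by rewrite mul0mx.
apply/rowP => j; rewrite mxE.
have := congr1 (fun A : 'M_1 => A 0 0) uu; rewrite !mxE.
under eq_bigr do rewrite mxE -expr2.
move/(psumr_eq0P (fun i _ => sqr_ge0 (u 0 i)))/(_ j isT)/eqP.
by rewrite sqrf_eq0 => /eqP.
Qed.

Lemma det_gram_mulmx m n (B : 'M[R]_(m, n)) (E : 'M[R]_n) :
  \det ((B *m E)^T *m (B *m E)) = \det E ^+ 2 * \det (B^T *m B).
Proof.
rewrite trmx_mul mulmxA -[E^T *m B^T *m B]mulmxA !det_mulmx det_tr.
by rewrite mulrC mulrA -expr2.
Qed.

Lemma det_gram_row_mx m n (b : 'cV[R]_m) (C : 'M[R]_(m, n)) : b^T *m C = 0 ->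
  \det ((row_mx b C)^T *m row_mx b C) = (b^T *m b) 0 0 * \det (C^T *m C).
Proof.
move=> bC; have Cb : C^T *m b = 0 by rewrite -[b]trmxK -trmx_mul bC trmx0.
by rewrite tr_row_mx mul_col_row bC Cb det_ublock det_mx11.
Qed.

Lemma det_gram_ge0 m n (B : 'M[R]_(m, n)) : 0 <= \det (B^T *m B).
Proof.
elim: n B => [|n IH] B; first by rewrite det_mx00.
suff gram_ge0 (B' : 'M[R]_(m, 1 + n)) : 0 <= \det (B'^T *m B') by exact: gram_ge0.
rewrite -[B']hsubmxK; set b : 'cV_m := lsubmx B'; set C := rsubmx B'.
set beta : R := (b^T *m b) 0 0.
have beta_ge0 : 0 <= beta.
  by rewrite /beta mxE sumr_ge0 // => k _; rewrite mxE -expr2 sqr_ge0.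
(* Gram--Schmidt: subtract from C its projection onto b. *)
set X : 'M_(1, n) := beta^-1 *: (b^T *m C); set C' : 'M_(m, n) := C - b *m X.
have bC' : b^T *m C' = 0.
  have [beta0|beta_neq0] := eqVneq beta 0.
    have /eqP-> : b^T == 0.
      by rewrite -mulmx_tr_row_eq0 trmxK [_ *m _]mx11_scalar -/beta beta0 raddf0.
    by rewrite mul0mx.
  rewrite mulmxBr mulmxA [b^T *m b]mx11_scalar -/beta mul_scalar_mx scalerA.
  by rewrite mulfV // scale1r subrr.
have -> : row_mx b C = row_mx b C' *m block_mx 1%:M X 0 (1%:M : 'M[R]_n).
  by rewrite mul_row_block !mulmx1 !mulmx0 addr0 /C' addrC subrK.
by rewrite det_gram_mulmx det_ublock !det1 mulr1 expr1n mul1r det_gram_row_mx // mulr_ge0.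
Qed.

Lemma ln_leif_subr1 (x : R) : 0 < x -> ln x <= x - 1 ?= iff (x == 1).
Proof.
move=> x_gt0; apply/leifP; have [->|x_neq1] := eqVneq x 1; first by rewrite ln1 subrr.
have := @expR_gt1Dx R (ln x); rewrite ln_eq0 // x_neq1 lnK ?posrE // => /(_ isT); lra.
Qed.

End Gram.

Section Design.
Variables (R : realType) (M N : nat) (V : 'M[R]_(M, N)).
Hypotheses (N_gt0 : (0 < N)%N) (rankV : \rank V = N).

Lemma nonnegZ c (w : 'rV[R]_M) : 0 <= c -> nonneg w -> nonneg (c *: w).
Proof. by move=> c_ge0 w_ge0 i; rewrite mxE mulr_ge0. Qed.

Lemma sqv_nonneg (z : 'rV[R]_M) : nonneg (sqv z).
Proof. by move=> i; rewrite mxE sqr_ge0. Qed.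

Lemma sqv_sqrt (w : 'rV[R]_M) : nonneg w -> sqv (map_mx Num.sqrt w) = w.
Proof. by move=> w_ge0; apply/rowP => i; rewrite !mxE sqr_sqrtr. Qed.

Lemma norm1Z c (w : 'rV[R]_M) : norm1 (c *: w) = `|c| * norm1 w.
Proof. by rewrite /norm1 mulr_sumr; apply: eq_bigr => i _; rewrite mxE normrM. Qed.

Lemma norm1_ge0 (w : 'rV[R]_M) : 0 <= norm1 w.
Proof. exact: sumr_ge0. Qed.

Lemma norm1_eq0 (w : 'rV[R]_M) : (norm1 w == 0) = (w == 0).
Proof.
apply/eqP/eqP => [w0|->]; last by rewrite /norm1 big1 // => i _; rewrite mxE normr0.
apply/rowP => i; apply/eqP; rewrite mxE -normr_eq0.
by move/(psumr_eq0P (fun j _ => normr_ge0 (w 0 j))): w0 => /(_ i isT)->.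
Qed.

Lemma GmxZ c w : Gmx V (c *: w) = c *: Gmx V w.
Proof. by rewrite /Gmx linearZ /= scalemxAl scalemxAr. Qed.

Lemma det_GmxZ c w : \det (Gmx V (c *: w)) = c ^+ N * \det (Gmx V w).
Proof. by rewrite GmxZ detZ. Qed.

Lemma det_Gmx_ge0 w : nonneg w -> 0 <= \det (Gmx V w).
Proof.
move=> w_ge0; set B := diag_mx (map_mx Num.sqrt w) *m V.
have -> : Gmx V w = B^T *m B.
  rewrite trmx_mul tr_diag_mx mulmxA -[_ *m diag_mx _ *m diag_mx _]mulmxA mulmx_diag.
  congr (_ *m diag_mx _ *m _); rewrite -[in LHS](sqv_sqrt w_ge0).
  by apply/rowP => i; rewrite !mxE.
exact: det_gram_ge0.
Qed.

Lemma det_Gmx_gt0 w : nonneg w -> \det (Gmx V w) != 0 -> 0 < \det (Gmx V w).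
Proof. by move=> w_ge0 d_neq0; rewrite lt_def d_neq0 det_Gmx_ge0. Qed.

Lemma norm1_gt0 w : \det (Gmx V w) != 0 -> 0 < norm1 w.
Proof.
move=> d_neq0; rewrite lt_def norm1_ge0 andbT norm1_eq0; apply: contraNneq d_neq0 => ->.
by rewrite -(scale0r 0) det_GmxZ expr0n (gtn_eqF N_gt0) mul0r.
Qed.

Lemma det_Gmx1_neq0 : \det (Gmx V (const_mx 1)) != 0.
Proof.
rewrite /Gmx diag_const_mx mulmx1; apply/det0P => -[v v_neq0 vVV].
have /eqP : (v *m V^T) *m (v *m V^T)^T = 0.
  by rewrite trmx_mul trmxK mulmxA -(mulmxA v) vVV mul0mx.
rewrite mulmx_tr_row_eq0 => /eqP/eqP; rewrite mulmx_free_eq0 ?(negbTE v_neq0) //.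
by rewrite /row_free mxrank_tr rankV.
Qed.

Definition Efin w : R := - N%:R^-1 * ln (\det (Gmx V w)) + norm1 w.

Lemma EfunE w : \det (Gmx V w) != 0 -> Efun V w = (Efin w)%:E.
Proof. by rewrite /Efun => /negbTE->. Qed.

Lemma EfinZ t w : 0 < t -> nonneg w -> \det (Gmx V w) != 0 ->
  Efin (t *: w) = Efin w - ln t + (t - 1) * norm1 w.
Proof.
move=> t_gt0 w_ge0 d_neq0; have d_gt0 := det_Gmx_gt0 w_ge0 d_neq0.
rewrite /Efin det_GmxZ norm1Z gtr0_norm // lnM ?posrE ?exprn_gt0 // lnXn //.
have NK : N%:R^-1 * (ln t *+ N) = ln t.
  by rewrite -[ln t *+ N]mulr_natr mulrCA mulVf ?mulr1 // pnatr_eq0 -lt0n.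
rewrite !mulNr mulrDr NK; lra.
Qed.

Lemma feasible1_normalize w : nonneg w -> \det (Gmx V w) != 0 ->
  feasible1 ((norm1 w)^-1 *: w).
Proof.
move=> w_ge0 /norm1_gt0 s_gt0; split; first by apply: nonnegZ; rewrite // invr_ge0 ltW.
by rewrite norm1Z gtr0_norm ?invr_gt0 // mulVf ?gt_eqF.
Qed.

Lemma det_Gmx_normalize_gt0 w : nonneg w -> \det (Gmx V w) != 0 ->
  0 < \det (Gmx V ((norm1 w)^-1 *: w)).
Proof.
move=> w_ge0 d_neq0; have s_gt0 := norm1_gt0 d_neq0.
by rewrite det_GmxZ mulr_gt0 ?exprn_gt0 ?invr_gt0 ?det_Gmx_gt0.
Qed.

Lemma Efin_normalize_leif w : nonneg w -> \det (Gmx V w) != 0 ->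
  Efin ((norm1 w)^-1 *: w) <= Efin w ?= iff (norm1 w == 1).
Proof.
move=> w_ge0 d_neq0; have s_gt0 := norm1_gt0 d_neq0.
rewrite EfinZ ?invr_gt0 // lnV ?posrE // mulrBl (mulVf (lt0r_neq0 s_gt0)) mul1r.
apply/leifP; have /leifP := ln_leif_subr1 s_gt0; case: ifP => _.
  by move=> /eqP ln_s; apply/eqP; lra.
by move=> ln_s; lra.
Qed.

Lemma Efin_le_feasible u v : norm1 u = 1 -> norm1 v = 1 ->
  0 < \det (Gmx V u) -> 0 < \det (Gmx V v) ->
  (Efin u <= Efin v) = (\det (Gmx V v) <= \det (Gmx V u)).
Proof.
move=> u1 v1 du_gt0 dv_gt0; rewrite /Efin u1 v1 lerD2r !mulNr lerN2.
by rewrite ler_pM2l ?invr_gt0 ?ltr0n // ler_ln ?posrE.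
Qed.

Lemma solves1_solves2 w : solves1 V w -> solves2 V w.
Proof.
case=> -[w_ge0 w1] w_max; split=> // w' w'_ge0.
have [d'0|d'_neq0] := eqVneq (\det (Gmx V w')) 0; first by rewrite /Efun d'0 eqxx leey.
have u_feas := feasible1_normalize w'_ge0 d'_neq0.
have du_gt0 := det_Gmx_normalize_gt0 w'_ge0 d'_neq0.
have d_gt0 := lt_le_trans du_gt0 (w_max _ u_feas).
rewrite (EfunE (lt0r_neq0 d_gt0)) (EfunE d'_neq0) lee_fin.
apply: le_trans (Efin_normalize_leif w'_ge0 d'_neq0).
by rewrite Efin_le_feasible ?u_feas.2 ?w_max.
Qed.

Lemma solves2_solves1 w : solves2 V w -> solves1 V w.
Proof.
case=> w_ge0 w_min.
have d_neq0 : \det (Gmx V w) != 0.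
  have one_ge0 : nonneg (const_mx 1 : 'rV[R]_M) by move=> i; rewrite mxE.
  apply: contraTneq (w_min _ one_ge0) => d0.
  by rewrite /Efun d0 eqxx (negbTE det_Gmx1_neq0) leye_eq.
have w1 : norm1 w = 1.
  have leif_s := Efin_normalize_leif w_ge0 d_neq0.
  apply/eqP; rewrite -(eq_leif leif_s) eq_le leif_s /= -lee_fin -EfunE // -EfunE.
    by apply: w_min; apply: nonnegZ; rewrite // invr_ge0 norm1_ge0.
  exact: lt0r_neq0 (det_Gmx_normalize_gt0 w_ge0 d_neq0).
split=> // w' [w'_ge0 w'1].
have [->|d'_neq0] := eqVneq (\det (Gmx V w')) 0; first exact: det_Gmx_ge0.
rewrite -Efin_le_feasible ?det_Gmx_gt0 // -lee_fin -!EfunE //; exact: w_min.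
Qed.

Lemma solves3_solves2 z : solves3 V z <-> solves2 V (sqv z).
Proof.
split=> [z_min | [_ w_min] z']; last exact: w_min (sqv_nonneg z').
by split=> [|w w_ge0]; [exact: sqv_nonneg | rewrite -(sqv_sqrt w_ge0); exact: z_min].
Qed.

End Design.

Theorem mainTheorem2 (R : realType) (n M N : nat)
  (x : 'I_M -> 'rV[R]_n) (phi : 'I_N -> 'rV[R]_n -> R) :
  injective x ->
  (0 < N)%N ->
  let V : 'M[R]_(M, N) := \matrix_(i, j) phi j (x i) in
  \rank V = N ->
  (forall w : 'rV[R]_M, nonneg w -> (solves1 V w <-> solves2 V w)) /\
  (forall z : 'rV[R]_M, solves3 V z <-> solves1 V (sqv z)) /\
  (forall w : 'rV[R]_M, (solves1 V w \/ solves2 V w) -> D_optimal V w).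
Proof.
move=> _ N_gt0 V rankV.
have P12 w : solves1 V w <-> solves2 V w.
  by split; [exact: solves1_solves2 | exact: solves2_solves1].
split; first by move=> w _.
split; first by move=> z; rewrite solves3_solves2 P12.
by move=> w [|/P12].
Qed.
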